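(* For every approval-based SCV instance there exists a committee that simultaneously satisfies weak-SW-JR and IW-JR, and such a committee is produced by the following procedure: (1) start with $W=\emptyset$; (2) for each $j=1,\ldots,\ell$, repeatedly add to $W$ a candidate of $C_j$ whose support among voters not yet having an approved candidate in $W\cap C_j$ is largest, as long as this support is at least $n/k_j$ and fewer than $k_j$ candidates of $C_j$ have been chosen; (3) then, using the remaining positions, repeatedly add an unelected candidate (from a subset $C_j$ with $|W\cap C_j|<k_j$) whose support among voters having no approved candidate in $W$ is largest, as long as this support is at least $n/k$; (4) fill any remaining positions arbitrarily so that $|W\cap C_j|=k_j$ for all $j$. Here the support of a candidate $c$ among a set of voters $S$ is $|\{i\in S: c\in A_i\}|$.
   Context: An approval-based sub-committee voting (SCV) instance consists of a set of voters $N=\{1,\ldots,n\}$, a finite set of candidates $C$ partitioned into candidate subsets $C_1,\ldots,C_\ell$, positive integer quotas $k_j\le |C_j|$ with $k=\sum_{j=1}^\ell k_j$, and approval ballots $A_i\subseteq C$ for $i\in N$. A committee is a set $W\subseteq C$ with $|W\cap C_j|=k_j$ for every $j$. $W$ satisfies Intra-wise JR (IW-JR) if for every $X\subseteq N$ and every $j$, whenever $|X|\ge n/k_j$ and $|(\bigcap_{i\in X}A_i)\cap C_j|\ge 1$, we have $|W\cap C_j\cap \bigcup_{i\in X}A_i|\ge 1$. $W$ satisfies weak-SW-JR if for every $X\subseteq N$ with $|X|\ge n/k$ and $|(\bigcap_{i\in X}A_i)\cap C_j|\ge 1$ for all $j=1,\ldots,\ell$ we have $|W\cap \bigcup_{i\in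 X}A_i|\ge 1$. *)

From mathcomp Require Import all_boot.
Set Implicit Arguments. Unset Strict Implicit. Unset Printing Implicit Defensive.

(* An approval-based SCV instance:
   - voters N = 'I_n (n voters),
   - candidates: a finType C, partitioned by part : C -> 'I_l into C_0..C_{l-1},
   - quotas kq : 'I_l -> nat,
   - ballots A : 'I_n -> {set C}.
   Thresholds |X| >= n / k_j are written |X| * k_j >= n (exact rational
   comparison, no rounding). *)

Section SCV.
Variables (C : finType) (l n : nat) (part : C -> 'I_l) (kq : 'I_l -> nat)
          (A : 'I_n -> {set C}).

Definition Cj (j : 'I_l) : {set C} := [set c | part c == j].

Definition ktot : nat := \sum_(j < l) kq j.

Definition is_committee (W : {set C}) : Prop :=
  forall j : 'I_l, #|W :&: Cj j| = kq j.

Definition IW_JR (W : {set C}) : Prop :=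
  forall (X : {set 'I_n}) (j : 'I_l),
    n <= #|X| * kq j ->
    1 <= #|(\bigcap_(i in X) A i) :&: Cj j| ->
    1 <= #|W :&: Cj j :&: \bigcup_(i in X) A i|.

Definition weak_SW_JR (W : {set C}) : Prop :=
  forall X : {set 'I_n},
    n <= #|X| * ktot ->
    (forall j : 'I_l, 1 <= #|(\bigcap_(i in X) A i) :&: Cj j|) ->
    1 <= #|W :&: \bigcup_(i in X) A i|.

Definition supp (S : {set 'I_n}) (c : C) : nat := #|[set i in S | c \in A i]|.

Definition uncov_j (j : 'I_l) (W : {set C}) : {set 'I_n} :=
  [set i | [disjoint A i & W :&: Cj j]].

Definition uncov (W : {set C}) : {set 'I_n} := [set i | [disjoint A i & W]].

Inductive star (R : {set C} -> {set C} -> Prop) : {set C} -> {set C} -> Prop :=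
| star_refl W : star R W W
| star_step W1 W2 W3 : R W1 W2 -> star R W2 W3 -> star R W1 W3.

Definition step2 (j : 'I_l) (W W' : {set C}) : Prop :=
  exists c, [/\ W' = c |: W, (c \in Cj j) && (c \notin W),
     #|W :&: Cj j| < kq j,
     n <= supp (uncov_j j W) c * kq j &
     forall c', c' \in Cj j -> c' \notin W ->
       supp (uncov_j j W) c' <= supp (uncov_j j W) c].

Definition stop2 (j : 'I_l) (W : {set C}) : Prop :=
  kq j <= #|W :&: Cj j| \/
  (forall c', c' \in Cj j -> c' \notin W -> supp (uncov_j j W) c' * kq j < n).

Definition run2 (j : 'I_l) (W W' : {set C}) : Prop :=
  star (step2 j) W W' /\ stop2 j W'.

Definition eligible (W : {set C}) (c : C) : bool :=
  (c \notin W) && (#|W :&: Cj (part c)| < kq (part c)).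

Definition step3 (W W' : {set C}) : Prop :=
  exists c, [/\ W' = c |: W, eligible W c,
     n <= supp (uncov W) c * ktot &
     forall c', eligible W c' -> supp (uncov W) c' <= supp (uncov W) c].

Definition stop3 (W : {set C}) : Prop :=
  forall c', eligible W c' -> supp (uncov W) c' * ktot < n.

Definition run3 (W W' : {set C}) : Prop := star step3 W W' /\ stop3 W'.

(* W is a possible output of the whole procedure (any tie-breaking, any
   arbitrary filling in step (4)). *)
Definition procedure_output (W : {set C}) : Prop :=
  exists (Ws : nat -> {set C}) (W3 : {set C}),
    [/\ Ws 0 = set0,
        (forall j : 'I_l, run2 j (Ws j) (Ws j.+1)),
        run3 (Ws l) W3,
        W3 \subset W &
        is_committee W].

End SCV.

From mathcomp Require Import all_boot zify.
Set Implicit Arguments. Unset Strict Implicit. Unset Printing Implicit Defensive.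

(* For a group j let U_j(W) be the voters with no approved candidate in
   W ∩ C_j.  Throughout phase (2), |U_j(W)|·k_j + n·|W ∩ C_j| <= n·k_j: a step
   for group j adds one candidate of C_j and removes at least n/k_j voters from
   U_j, and steps for other groups change neither term.  Likewise phase (3)
   never increases |U(W)|·k + n·|W|, which starts below the sum of the group
   potentials, hence below n·k.
   Now let X, with |X| >= n/k_j voters commonly approving some c ∈ C_j, be
   unrepresented in W ∩ C_j.  When phase (2) stopped for group j, either C_j
   was full, and then the potential forces U_j = ∅ although X ⊆ U_j, or c had
   support at least |X| >= n/k_j among U_j and the phase could have continued.
   The same dichotomy at the end of phase (3) (some group is not full and its
   common candidate is eligible, or |W| >= k and the potential forces U = ∅)
   gives weak-SW-JR. *)

Lemma setU1I (T : finType) (x : T) (A B : {set T}) :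
  (x |: A) :&: B = if x \in B then x |: (A :&: B) else A :&: B.
Proof.
apply/setP => y; case: ifP => xB; rewrite !inE; case: eqVneq => [->|] //=.
by rewrite xB andbF.
Qed.

Lemma disjointsU1r (T : finType) (x : T) (A B : {set T}) :
  [disjoint A & x |: B] = (x \notin A) && [disjoint A & B].
Proof.
rewrite disjoint_sym (disjoint_sym A B) -disjointU1.
by apply: eq_disjoint => y; rewrite !inE.
Qed.

Lemma subset_card_eq (T : finType) (A : {set T}) m :
  m <= #|A| -> exists2 B : {set T}, B \subset A & #|B| = m.
Proof.
case/card_geqP => s [s_uniq <- sA]; exists [set x in s].
  by apply/subsetP => x; rewrite inE => /sA.
by rewrite cardsE (card_uniqP s_uniq).
Qed.

Lemma exists_between_card (T : finType) (X Y : {set T}) m :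
  X \subset Y -> #|X| <= m <= #|Y| ->
  exists S : {set T}, [/\ X \subset S, S \subset Y & #|S| = m].
Proof.
move=> sXY /andP[leXm lemY].
have [B sB cardB] : exists2 B : {set T}, B \subset Y :\: X & #|B| = m - #|X|.
  by apply: subset_card_eq; rewrite cardsD (setIidPr sXY); lia.
have XB0 : X :&: B = set0.
  by apply/eqP; rewrite setI_eq0; apply: disjointWr sB _;
     rewrite -setI_eq0 setDE setICA setICr setI0.
exists (X :|: B); split; first exact: subsetUl.
  by rewrite subUset sXY (subset_trans sB) ?subsetDl.
by rewrite cardsU XB0 cards0 cardB; lia.
Qed.

Lemma chain_exists (T : Type) (m : nat) (R : 'I_m -> T -> T -> Prop) (x0 : T) :
  (forall i x, exists y, R i x y) ->
  exists f : nat -> T, f 0 = x0 /\ forall i : 'I_m, R i (f i) (f i.+1).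
Proof.
move=> R_total.
suff /(_ m (leqnn m)) [f [f0 fR]] : forall k, k <= m -> exists f : nat -> T,
    f 0 = x0 /\ forall i : 'I_m, i < k -> R i (f i) (f i.+1).
  by exists f; split => // i; apply: fR.
elim=> [|k IH] lt_km; first by exists (fun=> x0).
have [f [f0 fR]] := IH (ltnW lt_km).
have [y Ry] := R_total (Ordinal lt_km) (f k).
exists (fun i => if i == k.+1 then y else f i); split => // i lt_ik.
rewrite /= eqSS (ltn_eqF lt_ik).
have [ik | ne_ik] := eqVneq (val i) k.
  by have -> : i = Ordinal lt_km by apply: val_inj.
by apply: fR; rewrite ltn_neqAle ne_ik -ltnS.
Qed.

Section Star.
Variables (C : finType) (R : {set C} -> {set C} -> Prop).

Lemma star_invariant (P : {set C} -> Prop) W W' :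
  (forall V V', R V V' -> P V -> P V') -> star R W W' -> P W -> P W'.
Proof. by move=> RP; elim=> // V1 V2 V3 /RP P12 _ P23 /P12 /P23. Qed.

Lemma star_subset W W' :
  (forall V V', R V V' -> V \subset V') -> star R W W' -> W \subset W'.
Proof.
move=> R_sub /(star_invariant (P := fun V => W \subset V)); apply=> //.
by move=> V V' /R_sub sVV' sWV; apply: subset_trans sWV sVV'.
Qed.

Lemma star_to_stop (stop : {set C} -> Prop) :
  (forall W, stop W \/ exists2 c, c \notin W & R W (c |: W)) ->
  forall W, exists W', star R W W' /\ stop W'.
Proof.
move=> progress W; have [m] := ubnP #|~: W|; elim: m W => // m IH W lt_Wm.
have [stopW | [c cW RW]] := progress W.
  by exists W; split; first exact: star_refl.
have [|W' [sW' stopW']] := IH (c |: W).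
  by have := cardsC W; have := cardsC (c |: W); rewrite cardsU1 cW; lia.
by exists W'; split => //; apply: star_step RW sW'.
Qed.

End Star.

Section Procedure.
Variables (C : finType) (l n : nat) (part : C -> 'I_l) (kq : 'I_l -> nat)
          (A : 'I_n -> {set C}).

Lemma in_Cj c j : (c \in Cj part j) = (part c == j).
Proof. by rewrite inE. Qed.

Lemma card_sum_Cj (W : {set C}) : #|W| = \sum_(j < l) #|W :&: Cj part j|.
Proof.
rewrite -sum1_card (partition_big part predT) //=.
by apply: eq_bigr => j _; rewrite -sum1_card; apply: eq_bigl => c; rewrite !inE andbC.
Qed.

Lemma bigcup_Cj (S : 'I_l -> {set C}) j :
  (forall j, S j \subset Cj part j) -> (\bigcup_j S j) :&: Cj part j = S j.
Proof.
move=> S_Cj; apply/setP => c; rewrite inE.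
apply/andP/idP => [[/bigcupP[j' _ cS] cj] | cS].
  by move: (subsetP (S_Cj j') c cS) cj; rewrite !in_Cj => /eqP-> /eqP<-.
by split; [apply/bigcupP; exists j | apply: (subsetP (S_Cj j))].
Qed.

Lemma uncov_jE j W : uncov_j part A j W = uncov A (W :&: Cj part j).
Proof. by []. Qed.

Lemma uncovS (V V' : {set C}) : V \subset V' -> uncov A V' \subset uncov A V.
Proof. by move=> sVV'; apply/subsetP => i; rewrite !inE; apply: disjointWr. Qed.

Lemma card_uncovU1 (V : {set C}) c :
  #|uncov A (c |: V)| + supp A (uncov A V) c = #|uncov A V|.
Proof.
rewrite addnC -(cardsID [set i | c \in A i] (uncov A V)).
by congr (_ + _); apply: eq_card => i; rewrite !inE // disjointsU1r.
Qed.

Lemma uncov_unrepresented (X : {set 'I_n}) (V : {set C}) :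
  #|V :&: \bigcup_(i in X) A i| = 0 -> X \subset uncov A V.
Proof.
move/eqP; rewrite cards_eq0 setI_eq0 => /bigcup_disjointP dis.
by apply/subsetP => i Xi; rewrite inE disjoint_sym dis.
Qed.

Lemma common_supp (X S : {set 'I_n}) c :
  X \subset S -> c \in \bigcap_(i in X) A i -> #|X| <= supp A S c.
Proof.
move=> sXS /bigcapP cX; apply: subset_leq_card; apply/subsetP => i Xi.
by rewrite inE (subsetP sXS _ Xi) cX.
Qed.

Lemma common_notin (X : {set 'I_n}) (V : {set C}) c :
  X \subset uncov A V -> c \in \bigcap_(i in X) A i -> 0 < #|X| -> c \notin V.
Proof.
move=> sXU /bigcapP cX /card_gt0P[i Xi].
by move: (subsetP sXU i Xi); rewrite inE => /disjointFr ->; last exact: cX.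
Qed.

Definition within_quotas (W : {set C}) : Prop :=
  forall j, #|W :&: Cj part j| <= kq j.

Definition group_potential j (W : {set C}) : nat :=
  #|uncov_j part A j W| * kq j + n * #|W :&: Cj part j|.

Definition potential (W : {set C}) : nat := #|uncov A W| * ktot kq + n * #|W|.

Lemma within_quotasU1 (W : {set C}) c :
  within_quotas W -> #|W :&: Cj part (part c)| < kq (part c) ->
  within_quotas (c |: W).
Proof.
move=> qW lt_c j; rewrite setU1I in_Cj; case: eqP => [<-|_] //.
by rewrite cardsU1; apply: leq_trans lt_c; rewrite -add1n leq_add2r leq_b1.
Qed.

Lemma step2_within_quotas j W W' :
  step2 part kq A j W W' -> within_quotas W -> within_quotas W'.
Proof.
case=> c [-> /andP[cj _] lt_j _ _] qW; apply: within_quotasU1 => //.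
by move: cj; rewrite in_Cj => /eqP->.
Qed.

Lemma step3_within_quotas W W' :
  step3 part kq A W W' -> within_quotas W -> within_quotas W'.
Proof. by case=> c [-> /andP[_ lt_c] _ _] qW; apply: within_quotasU1. Qed.

Lemma step2_subset j W W' : step2 part kq A j W W' -> W \subset W'.
Proof. by case=> c [-> _ _ _ _]; apply: subsetUr. Qed.

Lemma step3_subset W W' : step3 part kq A W W' -> W \subset W'.
Proof. by case=> c [-> _ _ _]; apply: subsetUr. Qed.

Lemma group_potential0 j : group_potential j set0 <= n * kq j.
Proof.
rewrite /group_potential set0I cards0 muln0 addn0 leq_mul2r.
by rewrite -[n in _ <= n]card_ord max_card orbT.
Qed.

Lemma step2_group_potential j j' W W' :
  step2 part kq A j' W W' -> group_potential j W' <= group_potential j W.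
Proof.
case=> c [-> /andP[cj' cW] _ supp_c _].
rewrite /group_potential !uncov_jE setU1I; case: ifP => cj //.
have {cj} ej : j' = j by move: cj cj'; rewrite !in_Cj => /eqP-> /eqP.
subst j'; rewrite uncov_jE in supp_c.
have cWj : c \notin W :&: Cj part j by rewrite inE (negbTE cW).
rewrite -(card_uncovU1 (W :&: Cj part j) c) cardsU1 cWj.
by rewrite mulnDl mulnDr; lia.
Qed.

Lemma step3_potential W W' : step3 part kq A W W' -> potential W' <= potential W.
Proof.
case=> c [-> /andP[cW _] supp_c _].
rewrite /potential -(card_uncovU1 W c) cardsU1 cW.
by rewrite mulnDl mulnDr; lia.
Qed.

Lemma potential_le_sum W : potential W <= \sum_(j < l) group_potential j W.
Proof.
rewrite /potential /ktot (card_sum_Cj W) !big_distrr -big_split.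
apply: leq_sum => j _; rewrite leq_add2r uncov_jE leq_mul2r.
by rewrite subset_leq_card ?orbT // uncovS // subsetIl.
Qed.

Lemma stop2_or_step2 j W :
  stop2 part kq A j W \/ exists2 c, c \notin W & step2 part kq A j W (c |: W).
Proof.
have [full | not_full] := leqP (kq j) #|W :&: Cj part j|; first by left; left.
set s := supp A (uncov_j part A j W).
pose P c := (c \in Cj part j) && (c \notin W).
have [/existsP[c0 /and3P[c0j c0W big_c0]] | /existsPn small] :=
  boolP [exists c, [&& c \in Cj part j, c \notin W & n <= s c * kq j]].
  have P_c0 : P c0 by rewrite /P c0j c0W.
  have [c /andP[cj cW] s_max] := arg_maxnP s P_c0.
  right; exists c => //; exists c; split; rewrite ?cj ?cW //.
    exact: leq_trans big_c0 (leq_mul (s_max _ P_c0) (leqnn _)).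
  by move=> c' c'j c'W; apply: s_max; rewrite /P c'j c'W.
by left; right => c' c'j c'W; move: (small c'); rewrite c'j c'W ltnNge.
Qed.

Lemma stop3_or_step3 W :
  stop3 part kq A W \/ exists2 c, c \notin W & step3 part kq A W (c |: W).
Proof.
set s := supp A (uncov A W).
have [/existsP[c0 /andP[c0_el big_c0]] | /existsPn small] :=
  boolP [exists c, eligible part kq W c && (n <= s c * ktot kq)].
  have [c c_el s_max] := arg_maxnP s c0_el.
  right; exists c; first by case/andP: c_el.
  by exists c; split => //; apply: leq_trans big_c0 (leq_mul (s_max _ c0_el) (leqnn _)).
by left => c' c'_el; move: (small c'); rewrite c'_el ltnNge.
Qed.

Lemma run2_exists j W : exists W', run2 part kq A j W W'.
Proof. exact: star_to_stop (@stop2_or_step2 j) W. Qed.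

Section Phase2.
Variable Ws : nat -> {set C}.
Hypothesis run2_Ws : forall j : 'I_l, run2 part kq A j (Ws j) (Ws j.+1).

Lemma phase2_subset i : i <= l -> Ws i \subset Ws l.
Proof.
move=> le_il; apply: (homo_leq_in (D := [pred i | i <= l]) (f := Ws)
    (r := fun V V' => V \subset V') (@subxx _ _)
    (fun _ _ _ => @subset_trans _ _ _ _)); rewrite ?inE //.
  by move=> a b _; rewrite !inE => le_bl k /andP[_ /ltnW/leq_trans]; apply.
move=> k _; rewrite inE => lt_kl; have [s _] := run2_Ws (Ordinal lt_kl).
exact: star_subset (@step2_subset _) s.
Qed.

Hypothesis Ws0 : Ws 0 = set0.

Lemma phase2_invariant (P : {set C} -> Prop) :
  P set0 -> (forall j V V', step2 part kq A j V V' -> P V -> P V') ->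
  forall i, i <= l -> P (Ws i).
Proof.
move=> P0 stepP; elim=> [|i IH] le_il; first by rewrite Ws0.
have [star_i _] := run2_Ws (Ordinal le_il).
exact: star_invariant (stepP _) star_i (IH (ltnW le_il)).
Qed.

Lemma phase2_group_potential j i : i <= l -> group_potential j (Ws i) <= n * kq j.
Proof.
move: i; apply: (phase2_invariant (P := fun V => group_potential j V <= n * kq j)).
  exact: group_potential0.
by move=> j' V V' /(step2_group_potential j) le_V'V /(leq_trans le_V'V).
Qed.

Lemma phase2_within_quotas i : i <= l -> within_quotas (Ws i).
Proof.
move: i; apply: (phase2_invariant (P := within_quotas)) (@step2_within_quotas).
by move=> j; rewrite set0I cards0.
Qed.

End Phase2.

Lemma committee_extension W :
  within_quotas W -> (forall j, kq j <= #|Cj part j|) ->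
  exists2 W' : {set C}, W \subset W' & is_committee part kq W'.
Proof.
move=> qW quota_le.
have S_ex j : exists S : {set C},
    [/\ W :&: Cj part j \subset S, S \subset Cj part j & #|S| = kq j].
  by apply: exists_between_card; rewrite ?subsetIr ?qW ?quota_le.
have [S S_spec] := fin_all_exists S_ex.
have S_Cj j : S j \subset Cj part j by have [] := S_spec j.
exists (\bigcup_j S j).
  apply/subsetP => c Wc; apply/bigcupP; exists (part c) => //.
  by have [sub _ _] := S_spec (part c); apply: (subsetP sub); rewrite !inE Wc eqxx.
by move=> j; rewrite bigcup_Cj //; have [] := S_spec j.
Qed.

Lemma procedure_output_exists :
  (forall j, kq j <= #|Cj part j|) -> exists W, procedure_output part kq A W.
Proof.
move=> quota_le.
have [Ws [Ws0 run2_Ws]] := chain_exists set0 run2_exists.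
have [W3 [run3_W3 stop3_W3]] := star_to_stop stop3_or_step3 (Ws l).
have qW3 : within_quotas W3.
  apply: star_invariant (@step3_within_quotas) run3_W3 _.
  exact: phase2_within_quotas run2_Ws Ws0 _ (leqnn l).
have [W sW3W committee] := committee_extension qW3 quota_le.
by exists W, Ws, W3.
Qed.

Hypothesis n_gt0 : 0 < n.

Lemma stop2_IW_JR_group j (W W' : {set C}) :
  group_potential j W <= n * kq j -> stop2 part kq A j W -> W \subset W' ->
  forall X : {set 'I_n}, n <= #|X| * kq j ->
    1 <= #|(\bigcap_(i in X) A i) :&: Cj part j| ->
    1 <= #|W' :&: Cj part j :&: \bigcup_(i in X) A i|.
Proof.
move=> pot stop sWW' X big_X /card_gt0P[c]; rewrite inE => /andP[cX cj].
rewrite lt0n; apply/negP => /eqP unrep.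
have XU : X \subset uncov_j part A j W.
  by apply: subset_trans (uncov_unrepresented unrep) (uncovS _); apply: setSI.
have X_gt0 : 0 < #|X| by move: big_X; case: #|X| => [|//]; rewrite mul0n; lia.
have := leq_mul (subset_leq_card XU) (leqnn (kq j)).
move: pot; rewrite /group_potential.
case: stop => [full | small].
  by have := leq_mul (leqnn n) full; lia.
have cW : c \notin W by move: (common_notin XU cX X_gt0); rewrite inE cj andbT.
by have := small c cj cW; have := leq_mul (common_supp XU cX) (leqnn (kq j)); lia.
Qed.

Lemma stop3_weak_SW_JR (W W' : {set C}) :
  potential W <= n * ktot kq -> stop3 part kq A W -> W \subset W' ->
  weak_SW_JR part kq A W'.
Proof.
move=> pot stop sWW' X big_X common; rewrite lt0n; apply/negP => /eqP unrep.
have XU : X \subset uncov A W := subset_trans (uncov_unrepresented unrep) (uncovS sWW').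
have X_gt0 : 0 < #|X| by move: big_X; case: #|X| => [|//]; rewrite mul0n; lia.
have [/forallP full | /forallPn[j]] := boolP [forall j, kq j <= #|W :&: Cj part j|].
  have k_le_W : ktot kq <= #|W| by rewrite (card_sum_Cj W); apply: leq_sum => j _.
  have := leq_mul (subset_leq_card XU) (leqnn (ktot kq)).
  by have := leq_mul (leqnn n) k_le_W; move: pot; rewrite /potential; lia.
rewrite -ltnNge => not_full; have /card_gt0P[c] := common j.
rewrite inE => /andP[cX cj].
have el_c : eligible part kq W c.
  by rewrite /eligible (common_notin XU cX X_gt0); move: cj; rewrite in_Cj => /eqP->.
by have := stop c el_c; have := leq_mul (common_supp XU cX) (leqnn (ktot kq)); lia.
Qed.

Lemma procedure_output_correct W :
  procedure_output part kq A W ->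
  [/\ is_committee part kq W, weak_SW_JR part kq A W & IW_JR part kq A W].
Proof.
case=> Ws [W3 [Ws0 run2_Ws [run3_W3 stop3_W3] sW3W committee]].
have sWlW3 : Ws l \subset W3 := star_subset (@step3_subset) run3_W3.
split => //.
  apply: stop3_weak_SW_JR stop3_W3 sW3W.
  apply: (star_invariant (P := fun V => potential V <= n * ktot kq) _ run3_W3).
    by move=> V V' /step3_potential le_V'V /(leq_trans le_V'V).
  apply: leq_trans (potential_le_sum _) _; rewrite /ktot big_distrr.
  by apply: leq_sum => j _; apply: phase2_group_potential.
move=> X j; have [_ stop_j] := run2_Ws j.
have sWjW : Ws j.+1 \subset W.
  exact: subset_trans (phase2_subset run2_Ws (ltn_ord j)) (subset_trans sWlW3 sW3W).
exact: stop2_IW_JR_group (phase2_group_potential run2_Ws Ws0 j (ltn_ord j)) stop_j sWjW X.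
Qed.

End Procedure.

Theorem mainTheorem6 (C : finType) (l n : nat) (part : C -> 'I_l)
    (kq : 'I_l -> nat) (A : 'I_n -> {set C}) :
  0 < n ->
  (forall j : 'I_l, 0 < kq j) ->
  (forall j : 'I_l, kq j <= #|Cj part j|) ->
  (exists W : {set C}, [/\ is_committee part kq W,
       weak_SW_JR part kq A W & IW_JR part kq A W]) /\
  (exists W : {set C}, procedure_output part kq A W) /\
  (forall W : {set C}, procedure_output part kq A W ->
       [/\ is_committee part kq W, weak_SW_JR part kq A W & IW_JR part kq A W]).
Proof.
move=> n_gt0 _ quota_le.
have [W outW] := procedure_output_exists A quota_le.
have correct := procedure_output_correct n_gt0.
by split; [exists W; apply: correct | split; [exists W | exact: correct]].
Qed.
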